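(* Let $n\ge3$ and $k\ge2$ be integers, and let $A=\mathrm{pdiag}(a_1,\dots,a_n)$ with $0\le a_1\le\dots\le a_n$. If there exists $i$ with $2\le i\le n-1$ such that $$a_i>\frac{\max\{(k-2)a_n,\ k a_1\}}{k-1},$$ then $D=A^k$ (which has the $k$-th root $A$) does not satisfy the root condition; that is, there exist $i',j',t\in[n]$ with $D_{i'j'}+D_{tt}<D_{i't}+D_{tj'}$.
   Context: Max-plus conventions: $\oplus=\max$, $\otimes=+$; $(A\otimes B)_{ij}=\max_t(A_{it}+B_{tj})$, $A^k$ is the $k$-fold max-plus power. $\mathrm{pdiag}(a_1,\dots,a_n)$ is the matrix with real diagonal entries $a_1,\dots,a_n$ and all off-diagonal entries equal to the real number $0$. A finite matrix $M\in\mathbb{R}^{n\times n}$ satisfies the root condition if $M_{ij}+M_{tt}\ge M_{it}+M_{tj}$ for all $i,j,t\in[n]$. *)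

From mathcomp Require Import all_boot all_order all_algebra.
Set Implicit Arguments. Unset Strict Implicit. Unset Printing Implicit Defensive.
Import Order.TTheory GRing.Theory Num.Theory.
Local Open Scope ring_scope.

Definition mpmx (R : realFieldType) (n : nat) := 'I_n -> 'I_n -> R.

Definition seqmax (R : realFieldType) (x0 : R) (s : seq R) : R :=
  foldr Num.max x0 s.

(* Max-plus product: (A (x) B)_ij = max_t (A_it + B_tj).  For n = 0 there are
   no entries, so the default value is irrelevant. *)
Definition mp_mul (R : realFieldType) (n : nat) (A B : mpmx R n) : mpmx R n :=
  fun i j => seqmax (A i i + B i j) [seq A i t + B t j | t <- enum 'I_n].

Fixpoint mp_pow (R : realFieldType) (n : nat) (A : mpmx R n) (k : nat) : mpmx R n :=
  match k with
  | 0 => A  (* not used: the statement only involves k >= 2 *)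
  | 1 => A
  | k'.+1 => mp_mul (mp_pow A k') A
  end.

Definition pdiag (R : realFieldType) (n : nat) (a : 'I_n -> R) : mpmx R n :=
  fun i j => if i == j then a i else 0.

Definition root_condition (R : realFieldType) (n : nat) (M : mpmx R n) : Prop :=
  forall i j t : 'I_n, M i t + M t j <= M i j + M t t.

From mathcomp Require Import all_boot all_order all_algebra.
From mathcomp Require Import lra zify.
Import Order.TTheory GRing.Theory Num.Theory.
Local Open Scope ring_scope.

(* Write D := pdiag(a)^(m+1) and z := a_n.  Entrywise, D_ij <= m z + [i = j] a_i,
   D_ii <= max((m+1) a_i, (m-1) z), D_ii >= (m+1) a_i, and an off-diagonal entry
   D_ij dominates both m a_i and m a_j.  With i' := i, j' := n, t := 1 this gives
   D_in + D_11 <= m z + max((m-1) z, (m+1) a_1) < m a_i + m z <= D_i1 + D_1n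
   as soon as max((m-1) z, (m+1) a_1) < m a_i, which is the hypothesis for k = m+1. *)

Section MaxPlus.
Variable R : realFieldType.

Lemma le_seqmax (x0 x : R) s : x \in x0 :: s -> x <= seqmax x0 s.
Proof.
elim: s x => [|y s IH] x; first by rewrite inE => /eqP ->.
rewrite /= le_max !inE => /or3P [/eqP->|/eqP->|xs].
- by rewrite IH ?orbT // inE eqxx.
- by rewrite lexx.
- by rewrite IH ?orbT // inE xs orbT.
Qed.

Lemma seqmax_le (x0 c : R) s :
  x0 <= c -> (forall x, x \in s -> x <= c) -> seqmax x0 s <= c.
Proof.
move=> x0c; elim: s => [|y s IH] sc //=.
by rewrite ge_max sc ?inE ?eqxx // IH // => x xs; rewrite sc // inE xs orbT.
Qed.

Variable n : nat.

Lemma le_mp_mul (A B : mpmx R n) i j t : A i t + B t j <= mp_mul A B i j.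
Proof.
apply: le_seqmax; rewrite inE; apply/orP; right.
by apply: (map_f (fun t => A i t + B t j)); rewrite mem_enum.
Qed.

Lemma mp_mul_le (A B : mpmx R n) i j c :
  (forall t, A i t + B t j <= c) -> mp_mul A B i j <= c.
Proof. by move=> Ac; apply: seqmax_le => // x /mapP [t _ ->]. Qed.

Lemma mp_powSS (A : mpmx R n) m : mp_pow A m.+2 = mp_mul (mp_pow A m.+1) A.
Proof. by []. Qed.

End MaxPlus.

Section PdiagPowers.
Variables (R : realFieldType) (n : nat) (a : 'I_n -> R).
Hypothesis a_ge0 : forall t, 0 <= a t.

Local Notation D m := (mp_pow (pdiag a) m.+1).

Lemma mp_pow_pdiag_le z (a_le : forall t, a t <= z) m i j :
  D m i j <= m%:R * z + (if i == j then a i else 0).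
Proof.
elim: m i j => [|m IH] i j; first by rewrite /= /pdiag mul0r add0r.
rewrite mp_powSS; apply: mp_mul_le => t; rewrite /pdiag -natr1.
have := IH i t; have := a_le j; have := a_le i; have := a_ge0 i.
case: (eqVneq t j) => [->|tj]; first by case: (i == j); lra.
case: (eqVneq i t) => [it|it]; last by case: (i == j); lra.
by rewrite -it in tj; rewrite (negbTE tj); lra.
Qed.

Lemma mp_pow_pdiag_diag_le z (a_le : forall t, a t <= z) m i c :
  m.+1%:R * a i <= c -> (m%:R - 1) * z <= c -> D m i i <= c.
Proof.
elim: m c => [|m IH] c; first by rewrite /= /pdiag eqxx mul1r.
rewrite -!natr1 => aic zc; rewrite mp_powSS; apply: mp_mul_le => t.
rewrite /pdiag; case: (eqVneq t i) => [->|ti].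
  suff : D m i i <= c - a i by lra.
  by apply: IH; move: aic zc (a_le i); rewrite -?natr1; lra.
have := mp_pow_pdiag_le _ a_le m i t; rewrite eq_sym (negbTE ti); lra.
Qed.

Lemma mp_pow_pdiag_diag_ge m i : m.+1%:R * a i <= D m i i.
Proof.
elim: m => [|m IH]; first by rewrite /= /pdiag eqxx mul1r.
rewrite mp_powSS; apply: le_trans (@le_mp_mul _ _ _ _ _ _ i).
rewrite /pdiag eqxx -natr1; lra.
Qed.

Lemma mp_pow_pdiag_offdiag_ge m i j :
  i != j -> m%:R * a i <= D m i j /\ m%:R * a j <= D m i j.
Proof.
move=> ij; elim: m => [|m [IHi IHj]]; first by rewrite /= /pdiag (negbTE ij) !mul0r.
rewrite mp_powSS; split.
  apply: le_trans (@le_mp_mul _ _ _ _ _ _ i).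
  by rewrite /pdiag (negbTE ij) addr0 mp_pow_pdiag_diag_ge.
apply: le_trans (@le_mp_mul _ _ _ _ _ _ j).
rewrite /pdiag eqxx -natr1; lra.
Qed.

Lemma mp_pow_pdiag_root_violation m (i i1 iN : 'I_n) :
  i != i1 -> i != iN -> i1 != iN -> (forall t, a t <= a iN) ->
  Num.max ((m%:R - 1) * a iN) (m.+1%:R * a i1) < m%:R * a i ->
  D m i iN + D m i1 i1 < D m i i1 + D m i1 iN.
Proof.
move=> i_i1 i_iN i1_iN a_le.
have Di_iN := mp_pow_pdiag_le _ a_le m i iN; rewrite (negbTE i_iN) addr0 in Di_iN.
have Di1_i1 : D m i1 i1 <= Num.max ((m%:R - 1) * a iN) (m.+1%:R * a i1).
  by apply: mp_pow_pdiag_diag_le => //; rewrite le_max lexx ?orbT.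
have [Di_i1 _] := mp_pow_pdiag_offdiag_ge m _ _ i_i1.
have [_ Di1_iN] := mp_pow_pdiag_offdiag_ge m _ _ i1_iN.
set M := Num.max _ _ in Di1_i1 *; lra.
Qed.

End PdiagPowers.

Theorem proposition4p11 (R : realFieldType) (n k : nat) (a : 'I_n -> R) :
  (3 <= n)%N -> (2 <= k)%N ->
  (forall i : 'I_n, 0 <= a i) ->
  (forall i j : 'I_n, (i <= j)%N -> a i <= a j) ->
  (exists (i : 'I_n) (i1 iN : 'I_n),
      val i1 = 0%N /\ val iN = n.-1 /\
      (1 <= i)%N /\ (i <= n - 2)%N /\
      a i > Num.max ((k - 2)%:R * a iN) (k%:R * a i1) / (k - 1)%:R) ->
  exists i' j' t : 'I_n,
    mp_pow (pdiag a) k i' j' + mp_pow (pdiag a) k t t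
      < mp_pow (pdiag a) k i' t + mp_pow (pdiag a) k t j'.
Proof.
move=> n3 k2 a_ge0 a_mono [i [i1 [iN [i1_0 [iN_last [i_ge1 [i_le lt_ai]]]]]]].
case: k k2 lt_ai => [|m] // m1 lt_ai.
have neq_ord (u v : 'I_n) : val u <> val v -> u != v.
  by move=> uv; apply/eqP => /(congr1 val).
exists i, iN, i1; apply: mp_pow_pdiag_root_violation => //.
- by apply: neq_ord; rewrite /= i1_0; lia.
- by apply: neq_ord; rewrite /= iN_last; lia.
- by apply: neq_ord; rewrite /= i1_0 iN_last; lia.
- by move=> t; apply: a_mono; rewrite iN_last; have := ltn_ord t; lia.
have km2 : (m.+1 - 2)%:R = m%:R - 1 :> R by rewrite natrB // -natr1; lra.
have m_gt0 : 0 < m%:R :> R by rewrite ltr0n; lia.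
by move: lt_ai; rewrite km2 subn1 /= ltr_pdivrMr // [a i * _]mulrC.
Qed.
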